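(* Let $n,r\ge 1$ be integers and $N=nr$. Let $\hat{\mathcal{S}}(n\times r)$ be the modular shuffle network defined below. Then $\hat{\mathcal{S}}(n\times r)$ is equivalent to the shuffle network $\mathcal{S}(N)$ in terms of connectivity: for every input group $ap'$ and every output group $bq'$ of $\hat{\mathcal{S}}(n\times r)$ ($a,b\in\{0,\dots,n-1\}$, $p',q'\in\{0,\dots,r-1\}$) there is exactly one fiber path $\hat f(ap'bq',bq'ap')$ joining them, it runs from input $ap'bq'$ to output $bq'ap'$, and, writing $p=ar+p'$ and $q=br+q'$, the correspondence $\hat f(ap'bq',bq'ap')\leftrightarrow f(pq,qp)$ is a bijection between the fibers of $\hat{\mathcal{S}}(n\times r)$ and those of $\mathcal{S}(N)$ preserving which input group and output group each fiber joins.
   Context: For an integer $M\ge1$, the $M^2\times M^2$ shuffle network $\mathcal{S}(M)$ has $M$ input groups and $M$ output groups, each of $M$ ports; input $pq$ denotes the $q$th input of the $p$th input group and output $qp$ denotes the $p$th output of the $q$th output group ($p,q\in\{0,\dots,M-1\}$), and for all $p,q$ input $pq$ is connected by a single fiber $f(pq,qp)$ to output $qp$. Thus exactly one fiber joins each input group to each output group, and the output address is the input address with its two sub-addresses exchanged. The modular shuffle network $\hat{\mathcal{S}}(n\times r)$ is built as follows. It has $N=nr$ input groups labelled $ap'$ and $N$ output groups labelled $bq'$ ($a,b\in\{0,\dots,n-1\}$, $p',q'\in\{0,\dots,r-1\}$). Input group $ap'$ has $N$ inputs split into $n$ subgroups $ap'b$ of $r$ inputs each, the $q'$th input of subgroup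 $ap'b$ being labelled $ap'bq'$; output group $bq'$ has $N$ outputs split into $n$ subgroups $bq'a$ of $r$ outputs each, the $p'$th output of subgroup $bq'a$ being labelled $bq'ap'$. There are $n^2$ copies $\mathcal{S}_{ab}(r)$ ($a,b\in\{0,\dots,n-1\}$) of the $r^2\times r^2$ shuffle network $\mathcal{S}(r)$. Input $ap'bq'$ of $\hat{\mathcal{S}}(n\times r)$ is linked to input $p'q'$ of $\mathcal{S}_{ab}(r)$, and output $bq'ap'$ of $\hat{\mathcal{S}}(n\times r)$ is linked to output $q'p'$ of $\mathcal{S}_{ab}(r)$. *)

From mathcomp Require Import all_boot.
Set Implicit Arguments. Unset Strict Implicit. Unset Printing Implicit Defensive.

(* input pq = (p,q) : p-th input group, q-th input in it;
   output qp = (q,p) : q-th output group, p-th output in it. *)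
Definition Sinput (M : nat) := ('I_M * 'I_M)%type.
Definition Soutput (M : nat) := ('I_M * 'I_M)%type.
(* fibers f(pq,qp), indexed by their input pq *)
Definition Sfiber (M : nat) := ('I_M * 'I_M)%type.
Definition S_in M (f : Sfiber M) : Sinput M := f.
Definition S_out M (f : Sfiber M) : Soutput M := (f.2, f.1).
Definition S_in_group M (x : Sinput M) : 'I_M := x.1.
Definition S_out_group M (y : Soutput M) : 'I_M := y.1.

(* input ap'bq' = (a,p',b,q'), in input group ap' = (a,p') *)
Definition Minput (n r : nat) := ('I_n * 'I_r * 'I_n * 'I_r)%type.
(* output bq'ap' = (b,q',a,p'), in output group bq' = (b,q') *)
Definition Moutput (n r : nat) := ('I_n * 'I_r * 'I_n * 'I_r)%type.
Definition M_in_group n r (x : Minput n r) : 'I_n * 'I_r := (x.1.1.1, x.1.1.2).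
Definition M_out_group n r (y : Moutput n r) : 'I_n * 'I_r := (y.1.1.1, y.1.1.2).
(* copies S_ab(r) indexed by (a,b) *)
Definition Mcopy (n : nat) := ('I_n * 'I_n)%type.

Definition link_in n r (x : Minput n r) (c : Mcopy n) (u : Sinput r) : bool :=
  x == (c.1, u.1, c.2, u.2).
Definition link_out n r (y : Moutput n r) (c : Mcopy n) (w : Soutput r) : bool :=
  y == (c.2, w.1, c.1, w.2).

(* A fiber path of \hat S: an input of \hat S, linked to the input end of a
   fiber of some copy S_ab(r), whose output end is linked to an output of \hat S. *)
Definition MpathData (n r : nat) :=
  (Minput n r * Mcopy n * Sfiber r * Moutput n r)%type.
Definition is_Mpath n r (d : MpathData n r) : bool :=
  let: (x, c, f, y) := d in link_in x c (S_in f) && link_out y c (S_out f).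
Definition Mpath (n r : nat) := {d : MpathData n r | is_Mpath d}.
Definition Mpath_in n r (P : Mpath n r) : Minput n r := (val P).1.1.1.
Definition Mpath_out n r (P : Mpath n r) : Moutput n r := (val P).2.

(** Each copy [S_ab(r)] is entered only from input subgroup [ap'b] and left only
    through output subgroup [bq'a], so a fiber path of the modular network is
    the same thing as its input [ap'bq'] and necessarily ends at [bq'ap'].
    Reading [ap'] and [bq'] as the mixed-radix numbers [p = ar + p'] and
    [q = br + q'] then matches these paths with the fibers [f(pq,qp)] of
    [S(nr)], group for group. *)

From mathcomp Require Import all_boot.
From mathcomp Require Import zify.
Set Implicit Arguments.
Unset Strict Implicit.
Unset Printing Implicit Defensive.

Section MixedRadix.
Variables n r : nat.

Lemma mixed_radix_lt (a : 'I_n) (p : 'I_r) : a * r + p < n * r.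
Proof. by have := ltn_ord a; have := ltn_ord p; nia. Qed.

Definition ord_of_pair (x : 'I_n * 'I_r) : 'I_(n * r) :=
  Ordinal (mixed_radix_lt x.1 x.2).

Lemma ord_mul_radix_gt0 (k : 'I_(n * r)) : 0 < r.
Proof. by case: r k => [|//] [k]; rewrite muln0. Qed.

Lemma ord_divn_lt (k : 'I_(n * r)) : k %/ r < n.
Proof. by rewrite ltn_divLR ?(ord_mul_radix_gt0 k). Qed.

Lemma ord_modn_lt (k : 'I_(n * r)) : k %% r < r.
Proof. by rewrite ltn_pmod ?(ord_mul_radix_gt0 k). Qed.

Definition pair_of_ord (k : 'I_(n * r)) : 'I_n * 'I_r :=
  (Ordinal (ord_divn_lt k), Ordinal (ord_modn_lt k)).

Lemma ord_of_pairK : cancel ord_of_pair pair_of_ord.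
Proof.
move=> [a p]; have r_gt0 : 0 < r by case: r p => [[]|].
congr (_, _); apply: val_inj => /=.
  by rewrite divnMDl // divn_small ?addn0.
by rewrite modnMDl modn_small.
Qed.

Lemma pair_of_ordK : cancel pair_of_ord ord_of_pair.
Proof. by move=> k; apply: val_inj; rewrite /= -divn_eq. Qed.

Lemma ord_of_pair_bij : bijective ord_of_pair.
Proof. exact: Bijective ord_of_pairK pair_of_ordK. Qed.

End MixedRadix.

Section ModularShuffle.
Variables n r : nat.

Definition fiber_path_data (a : 'I_n) (p' : 'I_r) (b : 'I_n) (q' : 'I_r)
  : MpathData n r :=
  ((a, p', b, q'), (a, b), (p', q'), (b, q', a, p')).

Lemma fiber_path_dataP a p' b q' : is_Mpath (fiber_path_data a p' b q').
Proof. by rewrite /is_Mpath /link_in /link_out /= !eqxx. Qed.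

Definition fiber_path a p' b q' : Mpath n r :=
  exist _ (fiber_path_data a p' b q') (fiber_path_dataP a p' b q').

Variant Mpath_spec : Mpath n r -> Type :=
  FiberPath a p' b q' : Mpath_spec (fiber_path a p' b q').

Lemma MpathP (P : Mpath n r) : Mpath_spec P.
Proof.
case: P => [[[[x [a b]] [p' q']] y] linked].
have [/eqP x_def /eqP y_def] := andP linked; subst x y.
by rewrite (_ : exist _ _ _ = fiber_path a p' b q'); last exact: val_inj.
Qed.

Lemma Mpath_of_groups (P : Mpath n r) a p' b q' :
  M_in_group (Mpath_in P) = (a, p') -> M_out_group (Mpath_out P) = (b, q') ->
  P = fiber_path a p' b q'.
Proof. by case: (MpathP P) => ? ? ? ? [-> ->] [-> ->]. Qed.

Definition Mpath_of_Minput (x : Minput n r) : Mpath n r :=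
  let: (a, p', b, q') := x in fiber_path a p' b q'.

Lemma Mpath_in_bij : bijective (@Mpath_in n r).
Proof.
exists Mpath_of_Minput; first by move=> P; case: (MpathP P).
by case=> [[[a p'] b] q'].
Qed.

End ModularShuffle.

Definition Sfiber_of_Minput n r (x : Minput n r) : Sfiber (n * r) :=
  (ord_of_pair x.1.1, ord_of_pair (x.1.2, x.2)).

Lemma Sfiber_of_Minput_bij n r : bijective (@Sfiber_of_Minput n r).
Proof.
have [g gK Kg] := ord_of_pair_bij n r.
exists (fun f : Sfiber (n * r) => (g f.1, (g f.2).1, (g f.2).2)).
  by case=> [[[a p'] b] q']; rewrite /= !gK.
by case=> p q; rewrite /Sfiber_of_Minput /= -!surjective_pairing !Kg.
Qed.

Theorem lemma2 (n r : nat) (hn : 0 < n) (hr : 0 < r) :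
  (forall (a b : 'I_n) (p' q' : 'I_r),
      (exists! P : Mpath n r,
          M_in_group (Mpath_in P) = (a, p') /\ M_out_group (Mpath_out P) = (b, q'))
      /\ (forall P : Mpath n r,
          M_in_group (Mpath_in P) = (a, p') -> M_out_group (Mpath_out P) = (b, q') ->
          Mpath_in P = (a, p', b, q') /\ Mpath_out P = (b, q', a, p')))
  /\
  (exists g : Mpath n r -> Sfiber (n * r),
      bijective g /\
      forall P : Mpath n r,
        let: (a, p', b, q') := Mpath_in P in
        [/\ val (g P).1 = a * r + p', val (g P).2 = b * r + q',
            val (S_in_group (S_in (g P))) = a * r + p'
          & val (S_out_group (S_out (g P))) =
              val (M_out_group (Mpath_out P)).1 * r + val (M_out_group (Mpath_out P)).2]).
Proof.
split=> [a b p' q'|].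
  split=> [|P /Mpath_of_groups P_def /P_def -> //].
  exists (fiber_path a p' b q'); split=> // P [in_P out_P].
  by rewrite (Mpath_of_groups in_P out_P).
exists (@Sfiber_of_Minput n r \o @Mpath_in n r); split.
  exact: bij_comp (Sfiber_of_Minput_bij n r) (Mpath_in_bij n r).
by move=> P; case: (MpathP P).
Qed.
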